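(* Let $I$ be an $f$-ideal of $S=K[x_1,\ldots,x_n]$. For an integer $l\in[n]$ with $l<ldeg(I)$, $sm(S)_l\subseteq\sqcap^\infty(G(I))$. On the other hand, if $l>deg(I)$, then $sm(S)_l\subseteq\sqcup^\infty(G(I))$.
   Context: $K$ is a field; $sm(S)_l$ is the set of square-free monomials of degree $l$; $G(I)$ is the minimal monomial generating set; $ldeg(I)$ and $deg(I)$ are the minimal and maximal degrees of elements of $G(I)$. For a set $A$ of square-free monomials, $\sqcup(A)=\{gx_i\mid g\in A,\ x_i\nmid g\}$, $\sqcap(A)=\{h\ne1\mid h=g/x_i \text{ for some } g\in A,\ x_i\mid g\}$, $\sqcup^\infty(A)=\bigcup_{i\ge1}\sqcup^i(A)$, $\sqcap^\infty(A)=\bigcup_{i\ge1}\sqcap^i(A)$. With $\sigma$ the bijection $x_{i_1}\cdots x_{i_k}\mapsto\{i_1,\ldots,i_k\}$, the facet complex $\delta_{\mathcal{F}}(I)$ has facets $\sigma(g)$, $g\in G(I)$, the Stanley–Reisner complex is $\delta_{\mathcal{N}}(I)=\{\sigma(g)\mid g\text{ square-free monomial},\ g\notin I\}$, and a square-free monomial ideal $I$ is an $f$-ideal if both complexes have the same $f$-vector. *)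

(* Square-free monomials of S = K[x_1..x_n] are identified with
   their supports via sigma: a square-free monomial is a {set 'I_n}
   (x_{i_1}...x_{i_k} <-> {i_1,...,i_k}); the monomial 1 is set0.
   A square-free monomial ideal I is determined by the set of square-free
   monomials it contains, which is an up-closed family (closed under
   multiplication by variables); we represent I by that family. *)
From mathcomp Require Import all_boot all_order.
Set Implicit Arguments. Unset Strict Implicit. Unset Printing Implicit Defensive.

Section Defs.
Variable n : nat.
Local Notation mon := {set 'I_n}.

Definition sqfree_monideal (U : {set mon}) : Prop :=
  forall A B : mon, A \in U -> A \subset B -> B \in U.

Definition mingens (U : {set mon}) : {set mon} :=
  [set A in U | [forall B in U, (B \subset A) ==> (B == A)]].

Definition ldeg (U : {set mon}) : nat := \big[minn/n]_(A in mingens U) #|A|.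
Definition deg (U : {set mon}) : nat := \max_(A in mingens U) #|A|.

Definition sm (l : nat) : {set mon} := [set A : mon | #|A| == l].

Definition sqcup (A : {set mon}) : {set mon} :=
  [set i |: g | g in A, i in ~: g].

Definition sqcap (A : {set mon}) : {set mon} :=
  [set g :\ i | g in A, i in g] :\ set0.

Definition in_sqcup_inf (A : {set mon}) (B : mon) : Prop :=
  exists i, (0 < i)%N /\ B \in iter i sqcup A.
Definition in_sqcap_inf (A : {set mon}) (B : mon) : Prop :=
  exists i, (0 < i)%N /\ B \in iter i sqcap A.

Definition facet_cx (U : {set mon}) : {set mon} :=
  [set F : mon | [exists g in mingens U, F \subset g]].

Definition sr_cx (U : {set mon}) : {set mon} := [set F : mon | F \notin U].

(* f_k(Δ) = number of faces of dimension k-1 ... we index by cardinality *)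
Definition fnum (D : {set mon}) (k : nat) : nat := #|[set F in D | #|F| == k]|.

(* f-vectors (f_0, f_1, ..., i.e. faces of dimension >= 0) coincide *)
Definition f_ideal (U : {set mon}) : Prop :=
  sqfree_monideal U /\
  forall k, (0 < k)%N -> fnum (facet_cx U) k = fnum (sr_cx U) k.

End Defs.

From mathcomp Require Import all_boot all_order.
From mathcomp Require Import zify.

(* Every monomial of the ideal lies above a minimal generator, and every face
   of the facet complex lies below one; degrees of generators are trapped in
   [ldeg, deg].  Below ldeg no monomial of degree l is in I, so the whole
   layer sm(S)_l consists of Stanley–Reisner faces; equality of f-vectors then
   forces every degree-l monomial to be a facet face, i.e. to divide a
   generator, and removing variables one at a time reaches it in ⊓^∞(G(I)).
   Above deg no facet face has degree l, so no Stanley–Reisner face has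
   degree l either: every degree-l monomial is in I, hence a multiple of a
   generator, reached by adding variables one at a time in ⊔^∞(G(I)). *)

Set Implicit Arguments. Unset Strict Implicit. Unset Printing Implicit Defensive.

Lemma geq_bigminn (I : eqType) (r : seq I) (P : pred I) (F : I -> nat) m x :
  x \in r -> P x -> (\big[minn/m]_(i <- r | P i) F i <= F x)%N.
Proof.
elim: r => [//|y r IHr]; rewrite inE big_cons => /orP[/eqP-> Px | xr Px].
  by rewrite Px geq_minl.
case: (P y); last exact: IHr.
exact: leq_trans (geq_minr _ _) (IHr xr Px).
Qed.

Section SquareFreeMonomials.
Variable n : nat.
Local Notation mon := {set 'I_n}.
Implicit Types (A U D : {set mon}) (B C g : mon).

Lemma mem_iter_sqcap A g C : g \in A -> C \subset g -> C != set0 ->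
  C \in iter (#|g| - #|C|) (@sqcap n) A.
Proof.
move=> gA Cg; have := subset_leq_card Cg.
move Hk : (#|g| - #|C|) => k; elim: k C Cg Hk => [|k IHk] C Cg Hk leCg C0.
  suff -> : C = g by [].
  by apply/eqP; rewrite eqEcard Cg; lia.
have /set0Pn[i] : g :\: C != set0.
  by rewrite setD_eq0; apply/negP => /subset_leq_card; lia.
rewrite inE => /andP[iNC ig].
have iCg : i |: C \subset g by rewrite subUset sub1set ig Cg.
have iC_k : #|g| - #|i |: C| = k by rewrite cardsU1 iNC; lia.
have iC0 : i |: C != set0 by apply/set0Pn; exists i; rewrite setU11.
have iC_in := IHk _ iCg iC_k (subset_leq_card iCg) iC0.
rewrite iterS /sqcap in_setD1 C0; apply/imset2P.
by exists (i |: C) i; rewrite ?setU11 ?setU1K.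
Qed.

Lemma mem_iter_sqcup A g C : g \in A -> g \subset C ->
  C \in iter (#|C| - #|g|) (@sqcup n) A.
Proof.
move=> gA gC; have := subset_leq_card gC.
move Hk : (#|C| - #|g|) => k; elim: k C gC Hk => [|k IHk] C gC Hk legC.
  suff <- : g = C by [].
  by apply/eqP; rewrite eqEcard gC; lia.
have /set0Pn[i] : C :\: g != set0.
  by rewrite setD_eq0; apply/negP => /subset_leq_card; lia.
rewrite inE => /andP[iNg iC].
have gCi : g \subset C :\ i by rewrite subsetD1 gC iNg.
have Ci_k : #|C :\ i| - #|g| = k by have := cardsD1 i C; rewrite iC; lia.
have Ci_in := IHk _ gCi Ci_k (subset_leq_card gCi).
rewrite iterS /sqcup; apply/imset2P.
by exists (C :\ i) i; rewrite ?inE ?eqxx ?setD1K.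
Qed.

Lemma mingens_below U B : B \in U -> exists2 g, g \in mingens U & g \subset B.
Proof.
move=> BU; pose P := [pred C : mon | (C \in U) && (C \subset B)].
have PB : P B by rewrite /= BU subxx.
case: (arg_minnP (fun C : mon => #|C|) PB) => g /andP[gU gB] gmin.
exists g => //; rewrite inE gU; apply/forall_inP => C CU; apply/implyP => Cg.
by rewrite eqEcard Cg gmin //= CU (subset_trans Cg gB).
Qed.

Lemma ldeg_le_card U g : g \in mingens U -> (ldeg U <= #|g|)%N.
Proof. by move=> gG; apply: geq_bigminn; rewrite ?mem_index_enum. Qed.

Lemma card_le_deg U g : g \in mingens U -> (#|g| <= deg U)%N.
Proof. exact: leq_bigmax_cond. Qed.

Lemma ldeg_le_mem U B : B \in U -> (ldeg U <= #|B|)%N.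
Proof.
case/mingens_below=> g gG gB.
exact: leq_trans (ldeg_le_card gG) (subset_leq_card gB).
Qed.

Lemma facet_cx_le_deg U F : F \in facet_cx U -> (#|F| <= deg U)%N.
Proof.
rewrite inE => /exists_inP[g gG Fg].
exact: leq_trans (subset_leq_card Fg) (card_le_deg gG).
Qed.

Lemma fnumE D k : fnum D k = #|D :&: sm n k|.
Proof. by apply: eq_card => F; rewrite !inE. Qed.

Lemma fnum_full_layer (D1 D2 : {set mon}) k :
  fnum D1 k = fnum D2 k -> sm n k \subset D2 -> sm n k \subset D1.
Proof.
rewrite !fnumE => + /setIidPr smD2; rewrite smD2 => eq12.
by apply/setIidPr/eqP; rewrite eqEcard subsetIr eq12 /=.
Qed.

Lemma fnum_empty_layer (D1 D2 : {set mon}) k :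
  fnum D1 k = fnum D2 k -> [disjoint D1 & sm n k] -> [disjoint D2 & sm n k].
Proof. by rewrite -!setI_eq0 -!cards_eq0 -!fnumE => ->. Qed.

End SquareFreeMonomials.

Theorem corollary6p4 (n : nat) (U : {set {set 'I_n}}) :
  f_ideal U ->
  forall l : nat, (1 <= l <= n)%N ->
    ((l < ldeg U)%N ->
       forall B, B \in sm n l -> in_sqcap_inf (mingens U) B) /\
    ((deg U < l)%N ->
       forall B, B \in sm n l -> in_sqcup_inf (mingens U) B).
Proof.
move=> [_ f_eq] l /andP[l_gt0 _]; have f_eq_l := f_eq l l_gt0.
split=> lt_l B; rewrite inE => /eqP Bl.
- have sm_sr : sm n l \subset sr_cx U.
    apply/subsetP => C; rewrite !inE => /eqP Cl.
    by apply: contraTN lt_l => /ldeg_le_mem; rewrite Cl -leqNgt.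
  have : B \in facet_cx U by apply: subsetP (fnum_full_layer f_eq_l sm_sr) _ _;
    rewrite inE Bl.
  rewrite inE => /exists_inP[g gG Bg].
  have B0 : B != set0 by rewrite -cards_eq0 Bl -lt0n.
  exists (#|g| - #|B|); split; last exact: mem_iter_sqcap.
  by have := ldeg_le_card gG; lia.
- have facet_disj : [disjoint facet_cx U & sm n l].
    rewrite -setI_eq0; apply/eqP/setP => F; rewrite in_setI in_set0 [F \in sm _ _]inE.
    by apply/negP => /andP[/facet_cx_le_deg le_F /eqP Fl]; lia.
  have BU : B \in U.
    move: (fnum_empty_layer f_eq_l facet_disj); rewrite -setI_eq0.
    by move=> /eqP/setP/(_ B); rewrite !inE Bl eqxx andbT => /negbFE.
  case: (mingens_below BU) => g gG gB.
  exists (#|B| - #|g|); split; last exact: mem_iter_sqcup.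
  by have := card_le_deg gG; lia.
Qed.
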